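(* Let $G$ and $H$ be groups such that the power quandles $\mathrm{Pq}(G)$ and $\mathrm{Pq}(H)$ are isomorphic. Then the centers $\mathrm{Z}(G)$ and $\mathrm{Z}(H)$ have the same cardinality. If moreover $\mathrm{Z}(G)$ (equivalently $\mathrm{Z}(H)$) is finite, then $\mathrm{Z}(G)\cong\mathrm{Z}(H)$ as groups.
   Context: A power quandle $(P,\rhd,\pi,e)$ consists of a set $P$, a binary operation $\rhd$, an element $e$, and maps $\pi^n\colon P\to P$ ($n\in\mathbb{Z}$) satisfying: each $\lambda_a\colon b\mapsto a\rhd b$ is bijective and $a\rhd(b\rhd c)=(a\rhd b)\rhd(a\rhd c)$; $a\rhd a=a$; $e\rhd b=b$, $a\rhd e=e$; $\pi^1=\mathrm{id}$, $\pi^m\circ\pi^n=\pi^{mn}$; $\pi^0(a)=e$; $a\rhd\pi^n(b)=\pi^n(a\rhd b)$; $\pi^n(a)\rhd b=\lambda_a^n(b)$. An isomorphism of power quandles is a bijection preserving $\rhd$, all $\pi^n$ and $e$. For a group $G$, $\mathrm{Pq}(G)$ is the power quandle on the underlying set of $G$ with $a\rhd b=aba^{-1}$, $\pi^n(a)=a^n$, and $e$ the identity element. $\mathrm{Z}(G)$ denotes the center of $G$. *)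

(* arbitrary (possibly infinite) groups are modelled by
   mathcomp's [groupType] from boot/monoid.v. *)
From HB Require Import structures.
From mathcomp Require Import all_boot all_order all_algebra.
Set Implicit Arguments. Unset Strict Implicit. Unset Printing Implicit Defensive.

Local Open Scope group_scope.

Definition zpowg (G : groupType) (x : G) (n : int) : G :=
  match n with
  | Posz k => x ^+ k
  | Negz k => (x ^+ k.+1)^-1
  end.

Definition pq_op (G : groupType) (a b : G) : G := a * b * a^-1.
Definition pq_pi (G : groupType) (n : int) (a : G) : G := zpowg a n.
Definition pq_e (G : groupType) : G := 1.

Definition Pq_iso (G H : groupType) (f : G -> H) : Prop :=
  bijective f /\
  (forall a b : G, f (pq_op a b) = pq_op (f a) (f b)) /\
  (forall (n : int) (a : G), f (pq_pi n a) = pq_pi n (f a)) /\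
  f (pq_e G) = pq_e H.

Definition Pq_isomorphic (G H : groupType) : Prop :=
  exists f : G -> H, Pq_iso f.

Definition central (G : groupType) (z : G) : Prop :=
  forall g : G, z * g = g * z.
Definition center (G : groupType) : Type := {z : G | central z}.

Definition same_card (A B : Type) : Prop :=
  exists f : A -> B, bijective f.

Definition finite_type (A : Type) : Prop :=
  exists (n : nat) (e : 'I_n -> A), forall a : A, exists i, e i = a.

(* group isomorphism between the centers (the group law on Z(G) is the
   restriction of that of G, so multiplicativity is stated on representatives) *)
Definition center_group_iso (G H : groupType) (f : center G -> center H) : Prop :=
  bijective f /\
  forall x y xy : center G,
    proj1_sig xy = proj1_sig x * proj1_sig y ->
    proj1_sig (f xy) = proj1_sig (f x) * proj1_sig (f y).

From HB Require Import structures.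
From mathcomp Require Import all_boot all_order all_algebra.
From mathcomp Require Import all_fingroup pgroup cyclic abelian zify.
From Stdlib Require Import ProofIrrelevance.
Set Implicit Arguments. Unset Strict Implicit. Unset Printing Implicit Defensive.

(* A power-quandle isomorphism f fixes 1 and turns conjugation into
   conjugation, so z is central exactly when f z is: f restricts to a
   bijection between the centers, and this bijection commutes with powers.
   When the centers are finite, such a bijection preserves element orders.
   In a finite abelian group 'Ohm_k is the set of elements whose order has
   all prime exponents at most k, so the orders determine the sizes of all
   the 'Ohm_k; these sizes determine, for every p and n, how many invariant
   factors have p-adic valuation greater than n, hence the abelian type and
   the isomorphism class. *)

Lemma count_mem_leq (s : seq nat) n :
  count_mem n s = count (leq n) s - count (leq n.+1) s.
Proof.
elim: s => //= m s ->.
have : count (leq n.+1) s <= count (leq n) s by apply: sub_count => k /ltnW.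
by rewrite eq_sym; case: (ltngtP n m) => [nm|mn|->] /=; lia.
Qed.

Lemma perm_eq_count_leq (s t : seq nat) :
  (forall n, count (leq n) s = count (leq n) t) -> perm_eq s t.
Proof. by move=> eq_st; apply/allP => x _ /=; rewrite !count_mem_leq !eq_st. Qed.

Lemma eq_dvdn_sorted (s t : seq nat) :
    all (leq 1) s -> all (leq 1) t ->
    sorted [rel m n | n %| m] s -> sorted [rel m n | n %| m] t ->
    (forall p n, count (fun m => n <= logn p m) s = count (fun m => n <= logn p m) t) ->
  s = t.
Proof.
move=> s_pos t_pos s_sorted t_sorted eq_count.
have logn_sorted p u : all (leq 1) u -> sorted [rel m n | n %| m] u ->
    sorted geq (map (logn p) u).
  move=> u_pos; apply: homo_sorted_in u_pos => m n m_pos _ /=.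
  exact: dvdn_leq_log.
(* a nonincreasing sequence of nats is determined by its counts *)
have eq_logn p : map (logn p) s = map (logn p) t.
  apply: (sorted_eq (leT := geq)) => //.
  - by move=> m n r le_nm le_rm; apply: leq_trans le_rm le_nm.
  - by move=> m n; rewrite andbC; apply: anti_leq.
  - exact: logn_sorted.
  - exact: logn_sorted.
  - by apply: perm_eq_count_leq => n; rewrite !count_map; apply: eq_count.
have eq_size : size s = size t by rewrite -(size_map (logn 2)) eq_logn size_map.
apply: (eq_from_nth (x0 := 0)) => // i lt_i_s.
have lt_i_t : i < size t by rewrite -eq_size.
apply: eqn_from_log; [exact: (all_nthP 0 s_pos) | exact: (all_nthP 0 t_pos) |].
by move=> p; rewrite -!(nth_map 0 0 (logn p)) ?eq_logn.
Qed.

Local Open Scope group_scope.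

Lemma count_logn_abelian_type (gT : finGroupType) (G : {group gT}) p n :
    abelian G ->
  count (fun m => n < logn p m) (abelian_type G) =
    logn p #|'Ohm_n.+1(G) : 'Ohm_n(G)|.
Proof.
case/abelian_structure=> b defG <-.
by rewrite count_map -(count_logn_dprod_cycle _ _ defG).
Qed.

Lemma abelian_type_eq_card_Ohm (aT rT : finGroupType)
    (G : {group aT}) (H : {group rT}) :
    abelian G -> abelian H -> #|G| = #|H| ->
    (forall k, #|'Ohm_k(G)| = #|'Ohm_k(H)|) ->
  abelian_type G = abelian_type H.
Proof.
move=> cGG cHH eq_card eq_Ohm.
apply: eq_dvdn_sorted; rewrite ?abelian_type_dvdn_sorted //.
- by apply: sub_all (abelian_type_gt1 G) => m /ltnW.
- by apply: sub_all (abelian_type_gt1 H) => m /ltnW.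
move=> p [|n].
  rewrite !count_predT !size_abelian_type // /rank eq_card.
  by apply: eq_bigr => q _; rewrite !p_rank_abelian // eq_Ohm.
rewrite !count_logn_abelian_type // -!divgS ?Ohm_leq //=.
by rewrite !eq_Ohm.
Qed.

Definition logn_bounded k n := all (fun p => logn p n <= k) (primes n).

Lemma logn_boundedP k n : reflect (forall p, logn p n <= k) (logn_bounded k n).
Proof.
apply: (iffP allP) => [bounded p | bounded p _]; last exact: bounded.
case: (boolP (p \in primes n)) => [/bounded // | ].
by rewrite -logn_gt0 -leqNgt leqn0 => /eqP->.
Qed.

Lemma order_mul_dvdn_lcm (gT : finGroupType) (x y : gT) :
  commute x y -> #[x * y] %| lcmn #[x] #[y].
Proof.
move=> cxy; have xl : x ^+ lcmn #[x] #[y] = 1.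
  by apply/eqP; rewrite -order_dvdn dvdn_lcml.
have yl : y ^+ lcmn #[x] #[y] = 1.
  by apply/eqP; rewrite -order_dvdn dvdn_lcmr.
by rewrite order_dvdn expgMn // xl yl mulg1.
Qed.

Lemma Ohm_abelianE (gT : finGroupType) (G : {group gT}) k :
  abelian G -> 'Ohm_k(G) = [set x in G | logn_bounded k #[x]].
Proof.
move=> cGG; apply/eqP; rewrite eqEsubset; apply/andP; split.
  have bounded_group : group_set [set x in G | logn_bounded k #[x]].
    apply/group_setP; split.
      by rewrite inE group1 order1; apply/logn_boundedP => p; rewrite logn1.
    move=> x y; rewrite !inE => /andP[Gx /logn_boundedP bx] /andP[Gy /logn_boundedP b_y].
    rewrite groupM //; apply/logn_boundedP => p.
    have dvd_xy := order_mul_dvdn_lcm (centsP cGG x Gx y Gy).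
    apply: leq_trans (dvdn_leq_log _ _ dvd_xy) _; first by rewrite lcmn_gt0 !order_gt0.
    by rewrite logn_lcm ?order_gt0 // geq_max bx b_y.
  rewrite -(gen_set_id bounded_group) genS //; apply/subsetP => x.
  rewrite !inE => /andP[Gx /OhmPredP[p p_pr xp]]; rewrite Gx; apply/logn_boundedP => q.
  have dvd_x : #[x] %| p ^ k by rewrite order_dvdn xp.
  apply: leq_trans (dvdn_leq_log _ _ dvd_x) _; first by rewrite expn_gt0 prime_gt0.
  by rewrite lognX logn_prime //; case: (q == p); rewrite ?muln1 ?muln0.
apply/subsetP => x; rewrite inE => /andP[Gx /logn_boundedP bx].
rewrite -(prod_constt x); apply: group_prod => p _.
rewrite mem_gen // inE groupX //; apply/OhmPredP.
have [p_pr | p_npr] := boolP (prime p).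
  exists p => //; apply/eqP; rewrite -order_dvdn order_constt p_part.
  exact: dvdn_exp2l.
exists 2 => //; suff -> : x.`_p = 1 by rewrite expg1n.
by apply/eqP; rewrite -order_eq1 order_constt p_part lognE (negbTE p_npr).
Qed.

Section OrderPreservingBijection.
Variables (aT rT : finGroupType) (A : {group aT}) (B : {group rT}) (phi : aT -> rT).
Hypotheses (phi_inj : {in A &, injective phi}) (phiA : phi @: A = B).

Lemma order_expg_morph :
  (forall x n, x \in A -> phi (x ^+ n) = phi x ^+ n) -> {in A, forall x, #[phi x] = #[x]}.
Proof.
move=> phiX x Ax.
have phi1 : phi 1 = 1 by rewrite -(expg0 x) phiX // expg0.
have expg_eq1 n : (phi x ^+ n == 1) = (x ^+ n == 1).
  by rewrite -phiX // -phi1 (inj_in_eq phi_inj) ?groupX.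
apply/eqP; rewrite eqn_dvd !order_dvdn expg_eq1 expg_order eqxx.
by rewrite -expg_eq1; apply/eqP; apply: expg_order.
Qed.

Hypotheses (cAA : abelian A) (cBB : abelian B).
Hypothesis phi_order : {in A, forall x, #[phi x] = #[x]}.

Lemma card_Ohm_order_bij k : #|'Ohm_k(A)| = #|'Ohm_k(B)|.
Proof.
rewrite !Ohm_abelianE // -phiA.
have -> : [set y in phi @: A | logn_bounded k #[y]] =
          phi @: [set x in A | logn_bounded k #[x]].
  apply/setP => y; rewrite inE; apply/andP/imsetP.
    case=> /imsetP[x Ax ->]; rewrite phi_order // => bx.
    by exists x; rewrite // inE Ax.
  by case=> x; rewrite inE => /andP[Ax bx] ->; rewrite imset_f // phi_order.
by rewrite card_in_imset //; apply: sub_in2 phi_inj => x; rewrite inE => /andP[].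
Qed.

Theorem abelian_isog_order_bij : A \isog B.
Proof.
rewrite eq_abelian_type_isog //; apply/eqP; apply: abelian_type_eq_card_Ohm => //.
  by rewrite -phiA card_in_imset.
exact: card_Ohm_order_bij.
Qed.

End OrderPreservingBijection.

Lemma central_conjgE (K : groupType) (z : K) : central z <-> forall g, z * g * z^-1 = g.
Proof.
split=> zC g; first by rewrite zC mulgK.
by rewrite -[z * g](mulgVK z) zC.
Qed.

Lemma central1 (K : groupType) : central (1 : K).
Proof. by move=> g; rewrite mul1g mulg1. Qed.

Lemma centralM (K : groupType) (x y : K) : central x -> central y -> central (x * y).
Proof. by move=> xC yC g; rewrite -mulgA (yC g) mulgA (xC g) -mulgA. Qed.

Lemma centralV (K : groupType) (x : K) : central x -> central x^-1.
Proof. by move=> xC g; rewrite -[x^-1 * g](mulgK x) -(mulgA x^-1) -(xC g) mulKg. Qed.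

Lemma center_val_inj (K : groupType) : injective (@proj1_sig K (@central K)).
Proof. by case=> x xC [y yC] /= eq_xy; subst y; rewrite (proof_irrelevance _ xC yC). Qed.

Section PowerQuandleIso.
Variables (G H : groupType) (f : G -> H).
Hypothesis f_iso : Pq_iso f.

Lemma Pq_iso_bij : bijective f.
Proof. by case: f_iso. Qed.

Lemma Pq_iso_conjg a b : f (a * b * a^-1) = f a * f b * (f a)^-1.
Proof. by case: f_iso => _ [f_op _]; apply: f_op. Qed.

Lemma Pq_iso_expg x n : f (x ^+ n) = f x ^+ n.
Proof. by case: f_iso => _ [_ [f_pi _]]; apply: (f_pi (Posz n)). Qed.

Lemma central_Pq_iso z : central (f z) <-> central z.
Proof.
have [g fK gK] := Pq_iso_bij.
rewrite !central_conjgE; split=> zC x.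
  by apply: (can_inj fK); rewrite Pq_iso_conjg zC.
by rewrite -(gK x) -Pq_iso_conjg zC.
Qed.

Definition center_map (z : center G) : center H :=
  exist _ (f (sval z)) (proj2 (central_Pq_iso _) (proj2_sig z)).

Lemma center_map_bij : bijective center_map.
Proof.
have [g fK gK] := Pq_iso_bij.
have gC (z : center H) : central (g (sval z)).
  by apply/central_Pq_iso; rewrite gK; apply: proj2_sig.
exists (fun z => exist _ (g (sval z)) (gC z)) => z; apply: center_val_inj => /=.
  exact: fK.
exact: gK.
Qed.

End PowerQuandleIso.

(* The group theory of finite groups needs a finType carrier, so a finite
   center is realised as the subtype of a sequence enumerating it. *)
Record center_enum (K : groupType) := CenterEnum {
  center_seq :> seq K;
  mem_center_seq : forall x, x \in center_seq <-> central x }.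

Definition center_enum_of (K : groupType) n (e : 'I_n -> center K)
    (e_surj : forall z, exists i, e i = z) : center_enum K.
Proof.
exists [seq sval (e i) | i <- enum 'I_n] => x; split.
  by case/mapP=> i _ ->; apply: proj2_sig.
move=> xC; have [i ei] := e_surj (exist _ x xC).
by apply/mapP; exists i; rewrite ?mem_enum // ei.
Defined.

Section CenterFinGroup.
Context {K : groupType} (E : center_enum K).

Definition center_fin := seq_sub E.
HB.instance Definition _ := Finite.copy center_fin (seq_sub E).

Lemma central_center_fin (a : center_fin) : central (val a).
Proof. exact/(mem_center_seq E)/ssvalP. Qed.

Definition center_fin_one : center_fin :=
  SeqSub (proj2 (mem_center_seq E 1) (@central1 K)).
Definition center_fin_mul (a b : center_fin) : center_fin :=
  SeqSub (proj2 (mem_center_seq E _)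
                (centralM (central_center_fin a) (central_center_fin b))).
Definition center_fin_inv (a : center_fin) : center_fin :=
  SeqSub (proj2 (mem_center_seq E _) (centralV (central_center_fin a))).

Lemma center_fin_mulA : associative center_fin_mul.
Proof. by move=> a b c; apply: val_inj; rewrite /= mulgA. Qed.

Lemma center_fin_mul1 : left_id center_fin_one center_fin_mul.
Proof. by move=> a; apply: val_inj; rewrite /= mul1g. Qed.

Lemma center_fin_mulV : left_inverse center_fin_one center_fin_inv center_fin_mul.
Proof. by move=> a; apply: val_inj; rewrite /= mulVg. Qed.

HB.instance Definition _ :=
  Finite_isGroup.Build center_fin center_fin_mulA center_fin_mul1 center_fin_mulV.

Lemma val_center_finM (a b : center_fin) : val (a * b) = val a * val b.
Proof. by []. Qed.

Lemma val_center_finX (a : center_fin) n : val (a ^+ n) = val a ^+ n.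
Proof.
elim: n => [|n IHn]; first by rewrite !expg0.
by rewrite !expgS val_center_finM IHn.
Qed.

Lemma center_fin_abelian : abelian [set: center_fin].
Proof.
apply/centsP => a _ b _; apply: val_inj.
by rewrite !val_center_finM central_center_fin.
Qed.

Definition center_fin_of (z : center K) : center_fin :=
  SeqSub (proj2 (mem_center_seq E _) (proj2_sig z)).

Definition center_of_fin (a : center_fin) : center K :=
  exist _ (val a) (central_center_fin a).

Lemma center_fin_ofK : cancel center_fin_of center_of_fin.
Proof. by move=> z; apply: center_val_inj. Qed.

Lemma center_of_finK : cancel center_of_fin center_fin_of.
Proof. by move=> a; apply: val_inj. Qed.

Lemma center_fin_of_bij : bijective center_fin_of.
Proof. exact: Bijective center_fin_ofK center_of_finK. Qed.

Lemma center_of_fin_bij : bijective center_of_fin.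
Proof. exact: Bijective center_of_finK center_fin_ofK. Qed.

End CenterFinGroup.

Lemma isog_setT_bij_morph (aT rT : finGroupType) :
    [set: aT] \isog [set: rT] ->
  exists2 g : aT -> rT, bijective g & {morph g : x y / x * y}.
Proof.
case/isogP=> g g_inj gT; exists g; last by move=> x y; rewrite morphM ?inE.
exists (invm g_inj) => x; first exact: invmE.
by apply: invmK; rewrite gT inE.
Qed.

Section FiniteCenterIso.
Variables (G H : groupType) (f : G -> H).
Hypothesis f_iso : Pq_iso f.
Variables (EG : center_enum G) (EH : center_enum H).

Definition center_fin_map (a : center_fin EG) : center_fin EH :=
  center_fin_of EH (center_map f_iso (center_of_fin a)).

Lemma center_fin_map_bij : bijective center_fin_map.
Proof.
exact: bij_comp (center_fin_of_bij EH)
  (bij_comp (center_map_bij f_iso) (center_of_fin_bij EG)).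
Qed.

Lemma center_fin_isog : [set: center_fin EG] \isog [set: center_fin EH].
Proof.
have [g mapK gK] := center_fin_map_bij.
have map_inj : {in [set: center_fin EG] &, injective center_fin_map}.
  by move=> a b _ _; apply: (can_inj mapK).
apply: (abelian_isog_order_bij map_inj); rewrite ?center_fin_abelian //.
  by apply/setP => b; rewrite inE; apply/imsetP; exists (g b); rewrite ?inE ?gK.
apply: order_expg_morph map_inj _ => a n _.
by apply: val_inj; rewrite /= !val_center_finX /= Pq_iso_expg.
Qed.

Lemma exists_center_group_iso : exists F : center G -> center H, center_group_iso F.
Proof.
have [g g_bij gM] := isog_setT_bij_morph center_fin_isog.
exists (fun z => center_of_fin (g (center_fin_of EG z))); split.
  exact: bij_comp (center_of_fin_bij EH)
    (bij_comp g_bij (center_fin_of_bij EG)).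
move=> x y xy eq_xy /=.
have -> : center_fin_of EG xy = center_fin_of EG x * center_fin_of EG y.
  by apply: val_inj; rewrite /= eq_xy.
by rewrite gM.
Qed.

End FiniteCenterIso.

Theorem mainTheorem5 (G H : groupType) :
  Pq_isomorphic G H ->
  same_card (center G) (center H) /\
  (finite_type (center G) ->
     exists f : center G -> center H, center_group_iso f).
Proof.
case=> f f_iso; split; first by exists (center_map f_iso); apply: center_map_bij.
case=> n [e e_surj].
have [g mapK gK] := center_map_bij f_iso.
have e'_surj z : exists i, center_map f_iso (e i) = z.
  by have [i ei] := e_surj (g z); exists i; rewrite ei gK.
exact: exists_center_group_iso f_iso (center_enum_of e_surj) (center_enum_of e'_surj).
Qed.
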